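(* Let $d\in\mathbb{N}$. For all $u,v\in\mathbb{N}$, $$\begin{pmatrix}(1/v)\,I_d&0\\0&u\,I_d\end{pmatrix}\Pi\subseteq\Pi,$$ that is, $(x,y)\in\Pi$ implies $(x/v,\,uy)\in\Pi$.
   Context: For $z\in\mathbb{R}^d$, $\|z\|$ denotes the sup-norm distance from $z$ to $\mathbb{Z}^d$. Write $\mathbb{N}=\{1,2,\dots\}$. For $\psi:\mathbb{N}\to\mathbb{R}_{\ge 0}$, let $W(\psi)$ be the set of pairs $(x,y)\in\mathbb{R}^d\times\mathbb{R}^d$ for which $\|nx+y\|<\psi(n)$ holds for infinitely many $n\in\mathbb{N}$. $\mathcal{D}$ is the set of all non-increasing $\psi:\mathbb{N}\to\mathbb{R}_{\ge0}$ with $\sum_n\psi(n)^d=\infty$, and $\Pi=\bigcap_{\psi\in\mathcal{D}}W(\psi)$. $I_d$ is the $d\times d$ identity matrix. *)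

From HB Require Import structures.
From mathcomp Require Import all_boot all_order all_algebra.
From mathcomp Require Import all_classical all_reals all_analysis.
Unset Printing Implicit Defensive.
Import Order.TTheory GRing.Theory Num.Theory.
Local Open Scope classical_set_scope.
Local Open Scope ring_scope.

Definition supdistZ (R : realType) (d : nat) (z : 'I_d -> R) : R :=
  inf [set r : R | exists m : 'I_d -> int,
         r = \big[Num.max/0]_(i < d) `|z i - (m i)%:~R| ].

Definition W (R : realType) (d : nat) (psi : nat -> R) : set (('I_d -> R) * ('I_d -> R)) :=
  [set p | infinite_set
     [set n : nat | (0 < n)%N /\
        @supdistZ R d (fun i => n%:R * p.1 i + p.2 i) < psi n]].

Definition inD (R : realType) (d : nat) (psi : nat -> R) : Prop :=
  (forall n, (0 < n)%N -> 0 <= psi n) /\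
  (forall m n, (0 < m)%N -> (m <= n)%N -> psi n <= psi m) /\
  ([sequence \sum_(1 <= n < N.+1) psi n ^+ d]_N @ \oo --> +oo).

Definition Pi (R : realType) (d : nat) : set (('I_d -> R) * ('I_d -> R)) :=
  [set p | forall psi : nat -> R, @inD R d psi -> @W R d psi p].

From HB Require Import structures.
From mathcomp Require Import all_boot all_order all_algebra.
From mathcomp Require Import all_classical all_reals all_analysis.
Import Order.TTheory GRing.Theory Num.Theory.
Local Open Scope classical_set_scope.
Local Open Scope ring_scope.

(* Given psi in D, set k = u v and phi m = psi (k m) / u.  Then phi is again in
   D: by a block (Cauchy condensation) estimate, the partial sums of psi^d up
   to k (M + 1) are bounded by a constant plus k u^d times those of phi^d.
   Hence ||m x + y|| < phi m for infinitely many m, and multiplying by u gives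
   ||(k m) (x / v) + u y|| <= u ||m x + y|| < psi (k m) for these m. *)

Section SupDist.
Context {R : realType} {d : nat}.

Definition supdist_to (z : 'I_d -> R) (m : 'I_d -> int) : R :=
  \big[Num.max/0]_(i < d) `|z i - (m i)%:~R|.

Lemma supdist_to_ge0 z m : 0 <= supdist_to z m.
Proof.
by rewrite /supdist_to; elim/big_ind: _ => // a b ha hb; rewrite le_max ha.
Qed.

Lemma supdistZ_le z m : supdistZ R d z <= supdist_to z m.
Proof.
apply: ge_inf; last by exists m.
by exists 0 => _ [m' ->]; apply: supdist_to_ge0.
Qed.

Lemma supdistZ_ltP z c : supdistZ R d z < c -> exists m, supdist_to z m < c.
Proof.
case/inf_lt; first by exists (supdist_to z (fun=> 0)), (fun=> 0).
by move=> _ [m ->]; exists m.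
Qed.

Lemma supdist_to_natrM (u : nat) z m :
  supdist_to (fun i => u%:R * z i) (fun i => u%:Z * m i)
  <= u%:R * supdist_to z m.
Proof.
apply: bigmax_le => [|i _]; first by rewrite mulr_ge0 ?supdist_to_ge0.
rewrite intrM -mulrBr normrM ger0_norm // ler_wpM2l //.
exact: (le_bigmax 0 (fun i => `|z i - (m i)%:~R|) i).
Qed.

Lemma supdistZ_natrM_lt {u : nat} {z c} : (0 < u)%N ->
  supdistZ R d z < c -> supdistZ R d (fun i => u%:R * z i) < u%:R * c.
Proof.
move=> u_gt0 /supdistZ_ltP [m zm_lt].
apply: le_lt_trans (supdistZ_le _ (fun i => u%:Z * m i)) _.
by apply: le_lt_trans (supdist_to_natrM u z m) _; rewrite ltr_pM2l ?ltr0n.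
Qed.

End SupDist.

Lemma sum_condensation_le (R : realType) (f : nat -> R) (k M : nat) :
  (0 < k)%N -> (forall m n, (0 < m)%N -> (m <= n)%N -> f n <= f m) ->
  \sum_(1 <= n < (k * M.+1).+1) f n <=
  \sum_(1 <= n < k.+1) f n + k%:R * \sum_(1 <= m < M.+1) f (k * m)%N.
Proof.
move=> k_gt0 f_noninc; elim: M => [|M IH].
  by rewrite muln1 [X in _ * X]big_geq // mulr0 addr0.
rewrite (big_cat_nat _ (n := (k * M.+1).+1)) //=; last first.
  by rewrite ltnS leq_mul2l leqnSn orbT.
rewrite [X in _ <= _ + _ * X]big_nat_recr //= mulrDr addrA lerD //.
apply: le_trans (ler_sum_nat (G := fun=> f (k * M.+1)%N) _) _.
  move=> n /andP [kM_lt _].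
  by apply: f_noninc; [rewrite muln_gt0 k_gt0 | exact: ltnW].
by rewrite sumr_const_nat mulr_natl subSS [X in (X - _)%N]mulnS addnK.
Qed.

Lemma inD_dilate (R : realType) (d : nat) (psi : nat -> R) (k : nat) (c : R) :
  (0 < k)%N -> 0 < c -> inD R d psi -> inD R d (fun m => psi (k * m)%N / c).
Proof.
move=> k_gt0 c_gt0 [psi_ge0 [psi_noninc psi_div]].
have km_gt0 m : (0 < m)%N -> (0 < k * m)%N by rewrite muln_gt0 k_gt0.
split; [|split].
- by move=> n n_gt0; rewrite divr_ge0 ?psi_ge0 ?km_gt0 ?ltW.
- move=> m n m_gt0 mn; rewrite ler_pM2r ?invr_gt0 //.
  by apply: psi_noninc; rewrite ?km_gt0 // leq_mul2l mn orbT.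
have psid_noninc m n : (0 < m)%N -> (m <= n)%N -> psi n ^+ d <= psi m ^+ d.
  move=> m_gt0 mn; apply: lerXn2r; rewrite ?nnegrE ?psi_ge0 ?psi_noninc //.
  exact: leq_trans mn.
apply/cvgryPge => A.
have [N0 _ N0_le] := (cvgryPge _).1 psi_div
  (k%:R * (A * c ^+ d) + \sum_(1 <= n < k.+1) psi n ^+ d).
exists N0 => // M /= N0_M.
have N0_kM : (N0 <= k * M.+1)%N.
  by rewrite (leq_trans N0_M) // (leq_trans (leqnSn M)) // leq_pmull.
have := le_trans (N0_le _ N0_kM)
  (@sum_condensation_le _ _ k M k_gt0 psid_noninc).
rewrite addrC lerD2l ler_pM2l ?ltr0n // -ler_pdivlMr ?exprn_gt0 // mulr_suml.
by under eq_bigr do rewrite expr_div_n.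
Qed.

Lemma W_dilate (R : realType) (d : nat) (psi : nat -> R) (k u : nat)
    (x y x' y' : 'I_d -> R) :
  (0 < k)%N -> (0 < u)%N ->
  (forall i, k%:R * x' i = u%:R * x i) -> (forall i, y' i = u%:R * y i) ->
  W R d (fun m => psi (k * m)%N / u%:R) (x, y) -> W R d psi (x', y').
Proof.
move=> k_gt0 u_gt0 x'E y'E Wxy fin_good; apply: Wxy.
pose good := [set n : nat | (0 < n)%N /\
  supdistZ R d (fun i => n%:R * x' i + y' i) < psi n].
have kmul_inj : {in (muln k) @^-1` good &, injective (muln k)}.
  by move=> a b _ _ /eqP; rewrite eqn_mul2l (gtn_eqF k_gt0) => /eqP.
apply: sub_finite_set (finite_preimage kmul_inj fin_good) => m /= [m_gt0 m_lt].
split; first by rewrite muln_gt0 k_gt0.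
have := supdistZ_natrM_lt u_gt0 m_lt.
rewrite mulrC divfK ?pnatr_eq0 -?lt0n //; congr (supdistZ _ _ _ < _).
apply/funext => i.
by rewrite natrM mulrAC x'E y'E mulrDr mulrCA [m%:R * _]mulrC.
Qed.

Theorem lemma11 (R : realType) (d : nat) (hd : (0 < d)%N) (u v : nat)
    (hu : (0 < u)%N) (hv : (0 < v)%N) (x y : 'I_d -> R) :
  Pi R d (x, y) ->
  Pi R d ((fun i => x i / v%:R), (fun i => u%:R * y i)).
Proof.
move=> Pxy psi psiD.
have uv_gt0 : (0 < u * v)%N by rewrite muln_gt0 hu hv.
apply: (@W_dilate R d psi (u * v)%N u x y) => //.
  by move=> i; rewrite natrM -mulrA [v%:R * _]mulrC divfK // pnatr_eq0 -lt0n.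
by apply/Pxy/inD_dilate; rewrite ?ltr0n.
Qed.
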